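(* Let $\mathscr H$ be a complex Hilbert space and $\mathbf{X},\mathbf{Y},\mathbf{Z},\mathbf{W}\in\mathbb{B}(\mathscr H)^d$. Then $$w_e\left(\begin{bmatrix}\mathbf{X}&\mathbf{Y}\\\mathbf{Z}&\mathbf{W}\end{bmatrix}\right)\le\frac12\Big(w_e(\mathbf{X})+w_e(\mathbf{W})+\sqrt{(w_e(\mathbf{X})-w_e(\mathbf{W}))^2+(\|\mathbf{Y}\|+\|\mathbf{Z}\|)^2}\Big).$$
   Context: $\mathbb{B}(\mathscr H)$ denotes the bounded linear operators on $\mathscr H$. For $\mathbf{T}=(T_1,\dots,T_d)$: $w_e(\mathbf{T})=\sup\{(\sum_{k}|\langle T_kx,x\rangle|^2)^{1/2}: \|x\|=1\}$ and $\|\mathbf{T}\|=\sup\{(\sum_k\|T_kx\|^2)^{1/2}: \|x\|=1\}$. For $d$-tuples $\mathbf{X},\mathbf{Y},\mathbf{Z},\mathbf{W}$, $\begin{bmatrix}\mathbf{X}&\mathbf{Y}\\\mathbf{Z}&\mathbf{W}\end{bmatrix}$ denotes the $d$-tuple $\left(\begin{bmatrix}X_k&Y_k\\Z_k&W_k\end{bmatrix}\right)_{k=1}^d$ of operators on $\mathscr H\oplus\mathscr H$. *)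

From HB Require Import structures.
From mathcomp Require Import all_boot all_order all_algebra.
From mathcomp Require Import classical_sets reals.
From mathcomp Require Import complex.
Set Implicit Arguments. Unset Strict Implicit. Unset Printing Implicit Defensive.
Import Order.TTheory GRing.Theory Num.Theory.
Local Open Scope ring_scope.
Local Open Scope classical_set_scope.

Section Hilbert.
Variable R : realType.
Local Notation C := (complex R).

Definition cabs2 (z : C) : R := (complex.Re z) ^+ 2 + (complex.Im z) ^+ 2.

Variable V : lmodType C.

Definition is_inner_product (ip : V -> V -> C) : Prop :=
  [/\ (forall (a : C) (x y z : V), ip (a *: x + y) z = a * ip x z + ip y z),
      (forall x y : V, ip y x = conjc (ip x y)),
      (forall x : V, 0 <= ip x x) &
      (forall x : V, ip x x = 0 -> x = 0)].

Definition hnorm (ip : V -> V -> C) (x : V) : R := Num.sqrt (complex.Re (ip x x)).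

Definition hilbert_complete (ip : V -> V -> C) : Prop :=
  forall u : nat -> V,
    (forall e : R, 0 < e -> exists N : nat, forall m n : nat,
        (N <= m)%N -> (N <= n)%N -> hnorm ip (u m - u n) < e) ->
    exists l : V, forall e : R, 0 < e -> exists N : nat, forall n : nat,
        (N <= n)%N -> hnorm ip (u n - l) < e.

Definition is_hilbert_space (ip : V -> V -> C) : Prop :=
  is_inner_product ip /\ hilbert_complete ip.

Definition bounded_op (ip : V -> V -> C) (T : V -> V) : Prop :=
  (forall (a : C) (x y : V), T (a *: x + y) = a *: T x + T y) /\
  exists M : R, forall x : V, hnorm ip (T x) <= M * hnorm ip x.

Definition euclid_numrad (ip : V -> V -> C) (d : nat) (T : 'I_d -> V -> V) : R :=
  sup [set r : R | exists x : V, hnorm ip x = 1 /\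
         r = Num.sqrt (\sum_(k < d) cabs2 (ip (T k x) x))].

Definition tuple_opnorm (ip : V -> V -> C) (d : nat) (T : 'I_d -> V -> V) : R :=
  sup [set r : R | exists x : V, hnorm ip x = 1 /\
         r = Num.sqrt (\sum_(k < d) hnorm ip (T k x) ^+ 2)].

End Hilbert.

Definition ip_dsum (R : realType) (V : lmodType (complex R))
  (ip : V -> V -> complex R) (p q : (V * V)%type) : complex R :=
  ip p.1 q.1 + ip p.2 q.2.

Definition block_op (R : realType) (V : lmodType (complex R))
  (X Y Z W : V -> V) (p : (V * V)%type) : (V * V)%type :=
  (X p.1 + Y p.2, Z p.1 + W p.2).

Definition block_tuple (R : realType) (V : lmodType (complex R)) (d : nat)
  (X Y Z W : 'I_d -> V -> V) : 'I_d -> (V * V)%type -> (V * V)%type :=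
  fun k => block_op (X k) (Y k) (Z k) (W k).

(** For a unit vector (x1, x2) of H (+) H put a = ||x1||,
    b = ||x2||, so a^2 + b^2 = 1.  The k-th coordinate of the quadratic form
    of the block tuple is <X_k x1,x1> + <Y_k x2,x1> + <Z_k x1,x2> + <W_k x2,x2>;
    Minkowski's inequality in C^d splits its Euclidean length into four terms,
    bounded by a^2 w_e(X), a b ||Y||, a b ||Z|| and b^2 w_e(W) respectively
    (homogeneity of w_e and ||.|| plus Cauchy-Schwarz for the off-diagonal
    terms).  The result is the quadratic form of the real symmetric matrix
    [[w_e(X), s/2], [s/2, w_e(W)]], s = ||Y|| + ||Z||, evaluated at the unit
    vector (a, b); it is bounded by the largest eigenvalue of that matrix,
    which is the right-hand side.  Taking the supremum concludes. *)
From HB Require Import structures.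
From mathcomp Require Import all_boot all_order all_algebra.
From mathcomp Require Import classical_sets reals.
From mathcomp Require Import complex.
From mathcomp Require Import boolp ring lra.
Import Order.TTheory GRing.Theory Num.Theory.
Local Open Scope ring_scope.
Local Open Scope complex_scope.

Set Implicit Arguments. Unset Strict Implicit.

Section RealInequalities.

(** A quadratic t |-> a - 2 t p + t^2 q that is nonnegative everywhere has
    nonpositive discriminant; this is the core of both Cauchy-Schwarz
    inequalities below. *)
Lemma discriminant_le (R : realFieldType) (a p q : R) : 0 <= q ->
  (forall t : R, 0 <= a - 2 * t * p + t ^+ 2 * q) -> p ^+ 2 <= a * q.
Proof.
move=> q_ge0 nonneg; have [q_gt0|] := ltrP 0 q.
  have := nonneg (p / q).
  have -> : a - 2 * (p / q) * p + (p / q) ^+ 2 * q = (a * q - p ^+ 2) / q.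
    by field; rewrite gt_eqF.
  by rewrite pmulr_lge0 ?invr_gt0 // subr_ge0.
move=> q_le0; have q0 : q = 0 by apply/eqP; rewrite eq_le q_le0 q_ge0.
subst q; rewrite mulr0; have [-> |p_neq0] := eqVneq p 0; first by rewrite expr0n.
have := nonneg ((a + 1) / (2 * p)).
have -> : a - 2 * ((a + 1) / (2 * p)) * p + ((a + 1) / (2 * p)) ^+ 2 * 0 = -1.
  by field.
by rewrite ler0N1.
Qed.

(** On the unit circle a^2 + b^2 = 1 the quadratic form of the symmetric
    matrix [[p, s/2], [s/2, q]] is at most its largest eigenvalue
    (p + q + sqrt((p - q)^2 + s^2)) / 2. *)
Lemma quadratic_form_le_max_eigenvalue (R : rcfType) (a b p q s : R) :
  a ^+ 2 + b ^+ 2 = 1 ->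
  a ^+ 2 * p + b ^+ 2 * q + s * (a * b) <=
  2^-1 * (p + q + Num.sqrt ((p - q) ^+ 2 + s ^+ 2)).
Proof.
move=> unit_ab.
set L := (a ^+ 2 - b ^+ 2) * (p - q) + 2 * a * b * s.
have -> : a ^+ 2 * p + b ^+ 2 * q + s * (a * b) = 2^-1 * (p + q + L).
  have -> : p + q = (a ^+ 2 + b ^+ 2) * (p + q) by rewrite unit_ab mul1r.
  by rewrite /L; field.
rewrite ler_pM2l ?invr_gt0 ?ltr0n // lerD2l.
apply: (le_trans (ler_norm L)); rewrite -sqrtr_sqr ler_sqrt ?addr_ge0 ?sqr_ge0 //.
(* Lagrange's identity: (a^2 + b^2)^2 ((p - q)^2 + s^2) = L^2 + (cross term)^2. *)
have -> : (p - q) ^+ 2 + s ^+ 2 = (a ^+ 2 + b ^+ 2) ^+ 2 * ((p - q) ^+ 2 + s ^+ 2)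
  by rewrite unit_ab expr1n mul1r.
rewrite -subr_ge0.
have -> : (a ^+ 2 + b ^+ 2) ^+ 2 * ((p - q) ^+ 2 + s ^+ 2) - L ^+ 2 =
  ((a ^+ 2 - b ^+ 2) * s - 2 * a * b * (p - q)) ^+ 2 by rewrite /L; ring.
exact: sqr_ge0.
Qed.

End RealInequalities.

Section ComplexEuclidean.
Variable R : realType.
Local Notation C := (complex R).

Definition rdot (u v : C) : R :=
  complex.Re u * complex.Re v + complex.Im u * complex.Im v.

Lemma cabs2_ge0 (z : C) : 0 <= cabs2 z.
Proof. by rewrite /cabs2 addr_ge0 ?sqr_ge0. Qed.

Lemma cabs2_0 : cabs2 (0 : C) = 0.
Proof. by rewrite /cabs2 /= expr0n /= addr0. Qed.

Lemma cabs2_realM (k : R) (z : C) : cabs2 (k%:C * z) = k ^+ 2 * cabs2 z.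
Proof. by case: z => a b; rewrite /cabs2 /=; ring. Qed.

Lemma cabs2D (u v : C) : cabs2 (u + v) = cabs2 u + cabs2 v + 2 * rdot u v.
Proof. by case: u => a b; case: v => c e; rewrite /cabs2 /rdot /=; ring. Qed.

Lemma cabs2_realMB (t : R) (u v : C) :
  cabs2 (t%:C * u - v) = t ^+ 2 * cabs2 u - 2 * t * rdot u v + cabs2 v.
Proof. by case: u => a b; case: v => c e; rewrite /cabs2 /rdot /=; ring. Qed.

Lemma minkowski (d : nat) (u v : 'I_d -> C) :
  Num.sqrt (\sum_(k < d) cabs2 (u k + v k)) <=
  Num.sqrt (\sum_(k < d) cabs2 (u k)) + Num.sqrt (\sum_(k < d) cabs2 (v k)).
Proof.
set A := \sum_(k < d) cabs2 (u k); set B := \sum_(k < d) cabs2 (v k).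
set P := \sum_(k < d) rdot (u k) (v k).
have A_ge0 : 0 <= A by apply: sumr_ge0 => k _; exact: cabs2_ge0.
have B_ge0 : 0 <= B by apply: sumr_ge0 => k _; exact: cabs2_ge0.
have cauchy_schwarz : P <= Num.sqrt A * Num.sqrt B.
  have P2 : P ^+ 2 <= B * A.
    apply: discriminant_le => // t.
    have <- : \sum_(k < d) cabs2 (t%:C * u k - v k) = B - 2 * t * P + t ^+ 2 * A.
      under eq_bigr => k _ do rewrite cabs2_realMB.
      rewrite big_split /= big_split /= sumrN -!mulr_sumr; rewrite /A /B /P; ring.
    by apply: sumr_ge0 => k _; exact: cabs2_ge0.
  apply: (le_trans (ler_norm P)); rewrite -sqrtr_sqr -sqrtrM // mulrC.
  by rewrite ler_sqrt ?mulr_ge0.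
have -> : \sum_(k < d) cabs2 (u k + v k) = A + B + 2 * P.
  under eq_bigr => k _ do rewrite cabs2D.
  by rewrite big_split /= big_split /= -mulr_sumr.
rewrite -[X in _ <= X]ger0_norm ?addr_ge0 ?sqrtr_ge0 // -sqrtr_sqr.
rewrite ler_sqrt ?sqr_ge0 // sqrrD !sqr_sqrtr //; lra.
Qed.

End ComplexEuclidean.

Section InnerProduct.
Variable R : realType.
Local Notation C := (complex R).
Variable V : lmodType C.
Variable ip : V -> V -> C.
Hypothesis ip_inner : is_inner_product ip.
Local Notation hn := (hnorm ip).

Lemma ipDl x y z : ip (x + y) z = ip x z + ip y z.
Proof. by case: ip_inner => lin _ _ _; rewrite -[x]scale1r lin mul1r scale1r. Qed.

Lemma ip0l z : ip 0 z = 0.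
Proof. by apply: (addrI (ip 0 z)); rewrite -ipDl !addr0. Qed.

Lemma ipZl a x z : ip (a *: x) z = a * ip x z.
Proof. by case: ip_inner => lin _ _ _; rewrite -[a *: x]addr0 lin ip0l addr0. Qed.

Lemma ipC x y : ip y x = conjc (ip x y).
Proof. by case: ip_inner => _ sym _ _; apply: sym. Qed.

Lemma ipDr x y z : ip z (x + y) = ip z x + ip z y.
Proof. by rewrite ipC ipDl rmorphD [ip z x]ipC [ip z y]ipC. Qed.

Lemma ipZr a x z : ip z (a *: x) = conjc a * ip z x.
Proof. by rewrite ipC ipZl rmorphM [ip z x]ipC. Qed.

Lemma ip_self x : ip x x = (hn x ^+ 2)%:C.
Proof.
case: ip_inner => _ _ pos _; have := pos x; rewrite /hnorm.
case: (ip x x) => a b; rewrite lecE /= => /andP [/eqP -> a_ge0].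
by rewrite sqr_sqrtr.
Qed.

Lemma hnorm_ge0 x : 0 <= hn x.
Proof. exact: sqrtr_ge0. Qed.

Lemma hnorm_eq0 x : hn x = 0 -> x = 0.
Proof. by move=> x0; case: ip_inner => _ _ _; apply; rewrite ip_self x0 expr0n. Qed.

Lemma hnormZ (k : R) x : hn (k%:C *: x) = `|k| * hn x.
Proof.
rewrite -[LHS]ger0_norm ?hnorm_ge0 // -sqrtr_sqr.
have -> : hn (k%:C *: x) ^+ 2 = (k * hn x) ^+ 2.
  apply: complexI; rewrite -ip_self ipZl ipZr ip_self conjc_real.
  by rewrite -!rmorphM; congr (_%:C); ring.
by rewrite sqrtr_sqr normrM (ger0_norm (hnorm_ge0 x)).
Qed.

(** Cauchy-Schwarz: |<u, v>|^2 <= ||u||^2 ||v||^2, from the nonnegativity of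
    ||u - t <u,v> v||^2 for all real t. *)
Lemma cauchy_schwarz u v : cabs2 (ip u v) <= hn u ^+ 2 * hn v ^+ 2.
Proof.
set c := ip u v; set A := hn u ^+ 2; set B := hn v ^+ 2.
have [c0|c_neq0] := eqVneq (cabs2 c) 0; first by rewrite c0 mulr_ge0 ?sqr_ge0.
have c_gt0 : 0 < cabs2 c by rewrite lt_neqAle eq_sym c_neq0 cabs2_ge0.
suff : cabs2 c ^+ 2 <= A * (cabs2 c * B) by rewrite expr2 mulrCA ler_pM2l.
apply: discriminant_le; first by rewrite mulr_ge0 ?cabs2_ge0 ?sqr_ge0.
move=> t; have := sqr_ge0 (hn (u + (- (t%:C * c)) *: v)).
congr (_ <= _); apply: complexI.
rewrite -ip_self !ipDl !ipDr !ipZl !ipZr !ip_self -/A -/B -/c [ip v u]ipC -/c.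
clear c_neq0 c_gt0; move: A B c => a b [c1 c2]; rewrite /cabs2 /=.
by apply/eqP; rewrite eq_complex /=; apply/andP; split; apply/eqP; ring.
Qed.

End InnerProduct.

Section BoundedOperators.
Variable R : realType.
Local Notation C := (complex R).
Variable V : lmodType C.
Variable ip : V -> V -> C.
Hypothesis ip_inner : is_inner_product ip.
Local Notation hn := (hnorm ip).

Lemma op0 (T : V -> V) : bounded_op ip T -> T 0 = 0.
Proof.
case=> lin _; have := lin 1 0 0; rewrite scaler0 addr0 scale1r => T0.
by apply: (addrI (T 0)); rewrite -T0 addr0.
Qed.

Lemma opZ (T : V -> V) a x : bounded_op ip T -> T (a *: x) = a *: T x.
Proof. by move=> hT; case: (hT) => lin _; rewrite -[a *: x]addr0 lin op0 // addr0. Qed.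

Definition sphere_values (f : V -> R) : set R :=
  [set r : R | exists x : V, hn x = 1 /\ r = f x].

Lemma le_sphere_sup (f : V -> R) (n : nat) : (0 < n)%N ->
  (forall (k : R) x, f (k%:C *: x) = `|k| ^+ n * f x) ->
  has_ubound (sphere_values f) ->
  forall x, f x <= sup (sphere_values f) * hn x ^+ n.
Proof.
move=> n_gt0 homog bounded x.
have [x0|x_neq0] := eqVneq (hn x) 0.
  rewrite x0 expr0n gtn_eqF // mulr0 (hnorm_eq0 ip_inner x0).
  have -> : (0 : V) = (0 : R)%:C *: 0 by rewrite scaler0.
  by rewrite homog normr0 expr0n gtn_eqF // mul0r.
have norm_x_gt0 : 0 < hn x by rewrite lt_neqAle eq_sym x_neq0 hnorm_ge0.
set y := ((hn x)^-1)%:C *: x.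
have unit_y : hn y = 1 by rewrite hnormZ // ger0_norm ?invr_ge0 ?hnorm_ge0 // mulVf.
have y_bound := ub_le_sup bounded (ex_intro _ y (conj unit_y erefl)).
rewrite /= homog ger0_norm ?invr_ge0 ?hnorm_ge0 // in y_bound.
by rewrite -ler_pdivrMr ?exprn_gt0 // mulrC -exprVn.
Qed.

Variable d : nat.

Lemma tuple_bounded (T : 'I_d -> V -> V) : (forall k, bounded_op ip (T k)) ->
  exists M, forall x, hn x = 1 -> \sum_(k < d) hn (T k x) ^+ 2 <= M.
Proof.
move=> hT.
have [f bound_f] : exists f : 'I_d -> R, forall k x, hn (T k x) <= f k * hn x.
  apply: (@fin_all_exists _ (fun=> R) (fun k M => forall x, hn (T k x) <= M * hn x)).
  by move=> k; case: (hT k).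
exists (\sum_(k < d) f k ^+ 2) => x unit_x; apply: ler_sum => k _.
have := bound_f k x; rewrite unit_x mulr1 => Tx_le.
by rewrite !expr2 ler_pM // hnorm_ge0.
Qed.

Lemma sum_sqr_norm_ge0 (T : 'I_d -> V -> V) x :
  0 <= \sum_(k < d) hn (T k x) ^+ 2.
Proof. by apply: sumr_ge0 => k _; rewrite sqr_ge0. Qed.

Lemma opnorm_le (T : 'I_d -> V -> V) (hT : forall k, bounded_op ip (T k)) x :
  Num.sqrt (\sum_(k < d) hn (T k x) ^+ 2) <= tuple_opnorm ip T * hn x.
Proof.
rewrite -[hn x]expr1; apply: le_sphere_sup => // [k y|].
  under eq_bigr => i _ do rewrite opZ // hnormZ // exprMn real_normK ?num_real //.
  by rewrite -mulr_sumr sqrtrM ?sqr_ge0 // sqrtr_sqr.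
have [M bound_M] := tuple_bounded hT.
exists (Num.sqrt M) => r [y [unit_y ->]].
by rewrite ler_sqrt ?(le_trans _ (bound_M y unit_y)) ?sum_sqr_norm_ge0.
Qed.

Lemma numrad_le (T : 'I_d -> V -> V) (hT : forall k, bounded_op ip (T k)) x :
  Num.sqrt (\sum_(k < d) cabs2 (ip (T k x) x)) <= euclid_numrad ip T * hn x ^+ 2.
Proof.
apply: le_sphere_sup => // [k y|].
  under eq_bigr => i _ do
    rewrite opZ // ipZl // ipZr // conjc_real mulrA -rmorphM cabs2_realM.
  rewrite -mulr_sumr sqrtrM ?sqr_ge0 // sqrtr_sqr -expr2 real_normK ?num_real //.
  by rewrite ger0_norm ?sqr_ge0.
have [M bound_M] := tuple_bounded hT.
exists (Num.sqrt M) => r [y [unit_y ->]].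
apply: (le_trans _ (_ : Num.sqrt (\sum_(k < d) hn (T k y) ^+ 2) <= _)).
  rewrite ler_sqrt ?sum_sqr_norm_ge0 //; apply: ler_sum => k _.
  by apply: (le_trans (cauchy_schwarz ip_inner _ _)); rewrite unit_y expr1n mulr1.
by rewrite ler_sqrt ?(le_trans _ (bound_M y unit_y)) ?sum_sqr_norm_ge0.
Qed.

Lemma cross_le (T : 'I_d -> V -> V) (hT : forall k, bounded_op ip (T k)) x y :
  Num.sqrt (\sum_(k < d) cabs2 (ip (T k y) x)) <= hn x * (tuple_opnorm ip T * hn y).
Proof.
apply: le_trans (_ : Num.sqrt (hn x ^+ 2 * \sum_(k < d) hn (T k y) ^+ 2) <= _).
  rewrite ler_sqrt ?mulr_ge0 ?hnorm_ge0 ?sum_sqr_norm_ge0 // mulr_sumr.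
  by apply: ler_sum => k _; rewrite mulrC; exact: cauchy_schwarz.
rewrite sqrtrM ?sqr_ge0 // sqrtr_sqr ger0_norm ?hnorm_ge0 //.
by rewrite ler_wpM2l ?hnorm_ge0 // opnorm_le.
Qed.

End BoundedOperators.

Lemma sup_ge0 (R : realType) (E : set R) : (forall r, E r -> 0 <= r) -> 0 <= sup E.
Proof.
move=> E_ge0; have [hs|no_sup] := pselect (has_sup E); last by rewrite sup_out.
by case: (hs) => [[e Ee] _]; exact: le_trans (E_ge0 e Ee) (sup_upper_bound hs Ee).
Qed.

(** A nonnegative upper bound dominates the supremum, even of the empty set
    (whose supremum is 0). *)
Lemma sup_le_ub (R : realType) (E : set R) b : 0 <= b ->
  (forall r, E r -> r <= b) -> sup E <= b.
Proof.
move=> b_ge0 ub; have [ne|empty] := pselect (exists x, E x).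
  by apply: ge_sup => // r; exact: ub.
by rewrite sup_out // => -[[x Ex] _]; apply: empty; exists x.
Qed.

Section BlockTuple.
Variable R : realType.
Local Notation C := (complex R).
Variable V : lmodType C.
Variable ip : V -> V -> C.
Hypothesis ip_inner : is_inner_product ip.
Local Notation hn := (hnorm ip).

Lemma hnorm_dsum_sqr (p : V * V) :
  hnorm (ip_dsum ip) p ^+ 2 = hn p.1 ^+ 2 + hn p.2 ^+ 2.
Proof.
rewrite {1}/hnorm /ip_dsum (ip_self ip_inner p.1) (ip_self ip_inner p.2) -rmorphD /=.
by rewrite sqr_sqrtr // addr_ge0 ?sqr_ge0.
Qed.

Variable d : nat.
Variables X Y Z W : 'I_d -> V -> V.
Hypotheses (hX : forall k, bounded_op ip (X k)) (hY : forall k, bounded_op ip (Y k))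
           (hZ : forall k, bounded_op ip (Z k)) (hW : forall k, bounded_op ip (W k)).

Lemma block_form_le (p : V * V) :
  Num.sqrt (\sum_(k < d) cabs2 (ip_dsum ip (block_tuple X Y Z W k p) p)) <=
  hn p.1 ^+ 2 * euclid_numrad ip X + hn p.2 ^+ 2 * euclid_numrad ip W +
  (tuple_opnorm ip Y + tuple_opnorm ip Z) * (hn p.1 * hn p.2).
Proof.
case: p => x1 x2 /=.
have -> : \sum_(k < d) cabs2 (ip_dsum ip (block_tuple X Y Z W k (x1, x2)) (x1, x2)) =
   \sum_(k < d) cabs2 ((ip (X k x1) x1 + ip (Y k x2) x1) +
                       (ip (Z k x1) x2 + ip (W k x2) x2)).
  by apply: eq_bigr => k _; rewrite /ip_dsum /block_tuple /block_op /= !(ipDl ip_inner).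
apply: le_trans (minkowski _ _) _.
have split_first := minkowski (fun k => ip (X k x1) x1) (fun k => ip (Y k x2) x1).
have split_second := minkowski (fun k => ip (Z k x1) x2) (fun k => ip (W k x2) x2).
have bound_X := numrad_le ip_inner hX x1.
have bound_Y := cross_le ip_inner hY x1 x2.
have bound_Z := cross_le ip_inner hZ x2 x1.
have bound_W := numrad_le ip_inner hW x2.
have -> : (tuple_opnorm ip Y + tuple_opnorm ip Z) * (hn x1 * hn x2) =
  hn x1 * (tuple_opnorm ip Y * hn x2) + hn x2 * (tuple_opnorm ip Z * hn x1) by ring.
simpl in split_first, split_second |- *; lra.
Qed.

End BlockTuple.

Unset Implicit Arguments. Set Strict Implicit.
Local Close Scope complex_scope.

Theorem corollary3p5 (R : realType) (V : lmodType (complex R))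
  (ip : V -> V -> complex R) (HH : is_hilbert_space ip)
  (d : nat) (X Y Z W : 'I_d -> V -> V)
  (hX : forall k, bounded_op ip (X k)) (hY : forall k, bounded_op ip (Y k))
  (hZ : forall k, bounded_op ip (Z k)) (hW : forall k, bounded_op ip (W k)) :
  euclid_numrad (ip_dsum ip) (block_tuple X Y Z W) <=
  2^-1 * (euclid_numrad ip X + euclid_numrad ip W +
          Num.sqrt ((euclid_numrad ip X - euclid_numrad ip W) ^+ 2 +
                    (tuple_opnorm ip Y + tuple_opnorm ip Z) ^+ 2)).
Proof.
have [ip_inner _] := HH.
have numrad_ge0 T : 0 <= euclid_numrad ip T.
  by apply: sup_ge0 => r [x [_ ->]]; exact: sqrtr_ge0.
apply: sup_le_ub => [|r [p [unit_p ->]]].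
  by rewrite mulr_ge0 ?invr_ge0 ?ler0n ?addr_ge0 ?numrad_ge0 ?sqrtr_ge0.
apply: le_trans (block_form_le ip_inner hX hY hZ hW p) _.
apply: quadratic_form_le_max_eigenvalue.
by rewrite -hnorm_dsum_sqr // unit_p expr1n.
Qed.
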